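(* Consider the system $\Sigma$, let $d:=\dim\ker D$, and suppose $\dim\mathcal{U}_{\rm imp}=f$ (where $f\ge 1$). Let $N$ be a matrix whose columns form a basis of $\ker\mathcal{M}_{f-d+1}$. Then: 1. $\mathcal{R}_s=\operatorname{img}\big(\begin{bmatrix}B&AB&\cdots&A^{f-d}B\end{bmatrix}N\big)$; 2. $\dim\mathcal{R}_s=f$.
   Context: $\Sigma$ is the system $\dot x=Ax+Bu$, $y=Cx+Du$ with $A\in\mathbb{R}^{n\times n}$, $B\in\mathbb{R}^{n\times m}$, $C\in\mathbb{R}^{p\times n}$, $D\in\mathbb{R}^{p\times m}$, transfer matrix $G(s)=C(sI_n-A)^{-1}B+D$. Impulsive-smooth inputs are distributions $u=u_{\rm reg}+\sum_{i=0}^k a_i\delta^{(i)}$ with $u_{\rm reg}$ the restriction to $\mathbb{R}_+$ of a $C^\infty(\mathbb{R},\mathbb{R}^m)$ function and $a_i\in\mathbb{R}^m$. A state $x_1\in\mathbb{R}^n$ is strongly reachable if there is an impulsive-smooth input $u$ such that the state trajectory from $x(0^-)=0$ satisfies $x(0^+)=x_1$ and the output is impulse-free (restriction to $\mathbb{R}_+$ of a $C^\infty$ function); the set of such states is the strongly reachable subspace $\mathcal{R}_s$. It is known (Hautus–Silverman) that $\mathcal{R}_s$ equals the stationary value of the nondecreasing sequence $\mathcal{R}_0=\{0\}$, $\mathcal{R}_{i+1}=\{Aw+B\alpha : w\in\mathcal{R}_i,\ \alpha\in\mathbb{R}^m,\ Cw+D\alpha=0\}$ (if $\mathcal{R}_{i+1}=\mathcal{R}_i$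 then $\mathcal{R}_s=\mathcal{R}_i$). An input $\sum_{i=0}^k u_i\delta^{(i)}$ ($u_i\in\mathbb{R}^m$) is an admissible impulsive input if the output from zero initial state is impulse-free, equivalently $G(s)\sum_i u_is^i$ is strictly proper; these form the vector space $\mathcal{U}_{\rm imp}$. For $k\ge1$, $\mathcal{M}_k$ is the $k\times k$ block matrix (blocks $p\times m$) whose $(i,j)$ block is $0$ if $i+j\le k$, $D$ if $i+j=k+1$, and $CA^{i+j-k-2}B$ if $i+j\ge k+2$ (so $\mathcal{M}_1=D$). *)

From HB Require Import structures.
From mathcomp Require Import all_boot all_order all_algebra.
From mathcomp Require Import reals.
Set Implicit Arguments. Unset Strict Implicit. Unset Printing Implicit Defensive.
Import Order.TTheory GRing.Theory Num.Theory.
Local Open Scope ring_scope.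

Section SystemDefs.
Variable R : fieldType.

Definition polmx a b (M : 'M[R]_(a, b)) : 'M[{poly R}]_(a, b) := map_mx polyC M.

(* Numerator of G(s) u(s), where G(s) = C (sI - A)^{-1} B + D and
   (sI - A)^{-1} = adj(sI - A) / det(sI - A) (Cramer's rule):
   G(s) u(s) = tf_num A B C D u / char_poly A. *)
Definition tf_num n m p (A : 'M[R]_n) (B : 'M[R]_(n, m)) (C : 'M[R]_(p, n))
  (D : 'M[R]_(p, m)) (u : 'cV[{poly R}]_m) : 'cV[{poly R}]_p :=
  polmx C *m \adj (char_poly_mx A) *m polmx B *m u
  + char_poly A *: (polmx D *m u).

(* An impulsive input u = sum_i u_i delta^(i) is encoded by the polynomial
   vector u(s) = sum_i u_i s^i.  It is admissible iff G(s) u(s) is strictly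
   proper: every entry num_i / char_poly A has deg num_i < deg char_poly A. *)
Definition U_imp n m p (A : 'M[R]_n) (B : 'M[R]_(n, m)) (C : 'M[R]_(p, n))
  (D : 'M[R]_(p, m)) (u : 'cV[{poly R}]_m) : Prop :=
  forall i : 'I_p, (size (tf_num A B C D u i ord0) < size (char_poly A))%N.

Definition pvdim m (S : 'cV[{poly R}]_m -> Prop) (f : nat) : Prop :=
  exists b : 'I_f -> 'cV[{poly R}]_m,
    [/\ forall i, S (b i),
        forall c : 'I_f -> R, \sum_i (c i)%:P *: b i = 0 -> forall i, c i = 0
      & forall u, S u -> exists c : 'I_f -> R, u = \sum_i (c i)%:P *: b i].

Definition vdim k (S : 'cV[R]_k -> Prop) (f : nat) : Prop :=
  exists b : 'I_f -> 'cV[R]_k,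
    [/\ forall i, S (b i),
        forall c : 'I_f -> R, \sum_i c i *: b i = 0 -> forall i, c i = 0
      & forall u, S u -> exists c : 'I_f -> R, u = \sum_i c i *: b i].

Fixpoint Rseq n m p (A : 'M[R]_n) (B : 'M[R]_(n, m)) (C : 'M[R]_(p, n))
  (D : 'M[R]_(p, m)) (i : nat) (x : 'cV[R]_n) : Prop :=
  match i with
  | 0 => x = 0
  | i'.+1 => exists (w : 'cV[R]_n) (alpha : 'cV[R]_m),
      [/\ Rseq A B C D i' w, C *m w + D *m alpha = 0 & x = A *m w + B *m alpha]
  end.

(* Strongly reachable subspace = stationary value of the nondecreasing
   sequence, i.e. its union. *)
Definition Rs n m p (A : 'M[R]_n) (B : 'M[R]_(n, m)) (C : 'M[R]_(p, n))
  (D : 'M[R]_(p, m)) (x : 'cV[R]_n) : Prop := exists i, Rseq A B C D i x.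

Definition Mk n m p (A : 'M[R]_n) (B : 'M[R]_(n, m)) (C : 'M[R]_(p, n))
  (D : 'M[R]_(p, m)) (k : nat) :
  'M[R]_((\sum_(i < k) p)%N, (\sum_(j < k) m)%N) :=
  @mxblock R k k (fun _ => p) (fun _ => m) (fun (i j : 'I_k) =>
    if ((i + j).+2 <= k)%N then 0
    else if (i + j).+1 == k then D
    else C *m A ^+ (i + j - k)%N *m B).

Definition ctrbk n m (A : 'M[R]_n) (B : 'M[R]_(n, m)) (k : nat) :
  'M[R]_(n, (\sum_(j < k) m)%N) :=
  @mxrow R k (fun _ => m) n (fun j => A ^+ j *m B).

Definition col_basis_ker r c q (M : 'M[R]_(r, c)) (N : 'M[R]_(c, q)) : Prop :=
  [/\ M *m N = 0,
      forall w : 'cV[R]_q, N *m w = 0 -> w = 0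
    & forall v : 'cV[R]_c, M *m v = 0 -> exists w : 'cV[R]_q, v = N *m w].

End SystemDefs.

From HB Require Import structures.
From mathcomp Require Import all_boot all_order all_algebra.
From mathcomp Require Import boolp reals zify.
Set Implicit Arguments. Unset Strict Implicit. Unset Printing Implicit Defensive.
Import Order.TTheory GRing.Theory Num.Theory.
Local Open Scope ring_scope.

(* An impulsive input sum_j v_j delta^(j) reaches the state sum_j A^j B v_j
   and is admissible iff M_k (v_0, ..., v_(k-1)) = 0, so R_k is the image of
   [B AB ... A^(k-1)B] on ker M_k.  For u(s) = sum_j v_j s^j the polynomial
   part of G(s) u(s) is C X(s) + D u(s), with X(s) the polynomial part of
   (sI - A)^-1 B u(s); hence admissible sequences are exactly U_imp.  If an
   admissible u reaches the zero state, all delays s^t u stay admissible, and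
   f + 1 of them are dependent in U_imp: q(s) u = 0 with q != 0, so u = 0.
   Thus the reached state determines the input and dim Rs = dim U_imp = f.
   Finally B ker D is a d-dimensional subspace of R_1 and every strict step of
   R_1 <= R_2 <= ... raises the dimension, so the chain is stationary from
   step f - d + 1 on. *)

Section PolynomialVectors.
Variable R : fieldType.

Definition vcoef q (u : 'cV[{poly R}]_q) j : 'cV[R]_q := \col_r (u r 0)`_j.

Lemma vcoef_inj q (u u' : 'cV[{poly R}]_q) :
  (forall j, vcoef u j = vcoef u' j) -> u = u'.
Proof.
move=> eq_u; apply/matrixP => r z; rewrite (ord1 z); apply/polyP => j.
by have /matrixP /(_ r 0) := eq_u j; rewrite !mxE.
Qed.

Lemma vcoef0 q j : vcoef (0 : 'cV[{poly R}]_q) j = 0.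
Proof. by apply/matrixP => r z; rewrite !mxE coef0. Qed.

Lemma vcoef_polmxX q (c : 'cV[R]_q) (u : 'cV[{poly R}]_q) j :
  vcoef (polmx c + 'X *: u) j = if j is j'.+1 then vcoef u j' else c.
Proof.
apply/matrixP => r z; rewrite (ord1 z) !mxE coefD coefC coefXM.
by case: j => [|j] /=; rewrite ?add0r ?addr0 ?mxE.
Qed.

Lemma polmxX_eq0 q (c : 'cV[R]_q) (u : 'cV[{poly R}]_q) :
  polmx c + 'X *: u = 0 <-> c = 0 /\ u = 0.
Proof.
split=> [cu0 | [-> ->]]; last by rewrite /polmx map_mx0 scaler0 addr0.
have := vcoef_polmxX c u; rewrite cu0 => vcoefE.
split; first by rewrite -(vcoefE 0%N) vcoef0.
by apply: vcoef_inj => j; rewrite -(vcoefE j.+1) !vcoef0.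
Qed.

Lemma size_det_le k s (M : 'M[{poly R}]_k) :
  (forall i j, (size (M i j) <= s.+1)%N) -> (size (\det M) <= (k * s).+1)%N.
Proof.
move=> size_M; apply: leq_trans (size_sum _ _ _) _; apply/bigmax_leqP => g _.
rewrite size_Msign; apply: leq_trans (size_poly_prod_leq _ _) _.
rewrite cardT size_enum_ord; apply: (@leq_trans ((\sum_(i < k) s.+1).+1 - k)).
  by apply: leq_sub2r; rewrite ltnS; apply: leq_sum => i _; apply: size_M.
by rewrite sum_nat_const card_ord; lia.
Qed.

Definition vsize q (u : 'cV[{poly R}]_q) := \max_(r < q) size (u r ord0).

Lemma vcoef_vsize q (u : 'cV[{poly R}]_q) j : (vsize u <= j)%N -> vcoef u j = 0.
Proof.
move=> le_uj; apply/matrixP => r z; rewrite !mxE nth_default //.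
by apply: leq_trans le_uj; exact: (@leq_bigmax _ (fun r => size (u r ord0)) r).
Qed.

Lemma vcoef_lin (I : finType) q (c : I -> R) (u : I -> 'cV[{poly R}]_q) j :
  vcoef (\sum_i (c i)%:P *: u i) j = \sum_i c i *: vcoef (u i) j.
Proof.
apply/matrixP => r z; rewrite !mxE summxE coef_sum summxE.
by apply: eq_bigr => i _; rewrite !mxE coefCM.
Qed.

End PolynomialVectors.

Section Dependence.
Variable R : fieldType.

Lemma nontrivial_dependence f (G : nat -> 'I_f -> R) :
  exists2 a : nat -> R, (exists2 j, (j < f.+1)%N & a j != 0)
    & forall i, \sum_(j < f.+1) a j * G j i = 0.
Proof.
pose M : 'M[R]_(f.+1, f) := \matrix_(j, i) G j i.
have : kermx M != 0 by rewrite -mxrank_eq0 mxrank_ker; have := rank_leq_col M; lia.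
case/rowV0Pn => w /sub_kermxP wM0 nz_w.
have [j nz_wj] : exists j : 'I_f.+1, w 0 j != 0.
  apply/existsP; apply: contraR nz_w => /existsPn w0.
  by apply/eqP/matrixP => a b; rewrite (ord1 a) mxE; apply/eqP/negPn/w0.
exists (fun j => if insub j is Some j' then w 0 j' else 0).
  by exists j; rewrite ?valK ?ltn_ord.
move=> i; have /matrixP /(_ 0 i) := wM0; rewrite !mxE => rel_w.
by rewrite -[RHS]rel_w; apply: eq_bigr => l _; rewrite valK mxE.
Qed.

Lemma pvdim_torsion m (S : 'cV[{poly R}]_m -> Prop) f u :
  pvdim S f -> (forall t, S ('X^t *: u)) -> exists2 q : {poly R}, q != 0 & q *: u = 0.
Proof.
move=> [b [_ _ b_spans]] Su.
have /choice [G uG] := fun t => b_spans _ (Su t).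
have [a [j lt_j nz_aj] rel_a] := nontrivial_dependence G.
exists (\poly_(j < f.+1) a j).
  apply: contraNneq nz_aj => a0.
  by have := coef_poly f.+1 a j; rewrite a0 coef0 lt_j => ->.
rewrite poly_def scaler_suml.
transitivity (\sum_(j < f.+1) (a j)%:P *: ('X^j *: u)).
  by apply: eq_bigr => l _; rewrite scalerA mul_polyC.
under eq_bigr do rewrite uG scaler_sumr.
rewrite exchange_big /=; apply: big1 => i _.
under eq_bigr do rewrite scalerA -polyCM.
by rewrite -scaler_suml -rmorph_sum /= rel_a scale0r.
Qed.

Definition vfree k r (F : nat -> 'cV[R]_k) := forall c : nat -> R,
  \sum_(i < r) c i *: F i = 0 -> forall i, (i < r)%N -> c i = 0.

Lemma vfree_le k r s (F : nat -> 'cV[R]_k) : vfree r F -> (s <= r)%N -> vfree s F.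
Proof.
move=> F_free le_sr c rel_c i lt_is.
pose c' i := if (i < s)%N then c i else 0.
suff : c' i = 0 by rewrite /c' lt_is.
apply: F_free; last exact: leq_trans lt_is le_sr.
rewrite -[RHS]rel_c (big_ord_widen r (fun i => c i *: F i) le_sr) [RHS]big_mkcond.
by apply: eq_bigr => j _; rewrite /c'; case: ifP; rewrite ?scale0r.
Qed.

Lemma vdim_vfree k (S : 'cV[R]_k -> Prop) f r (F : nat -> 'cV[R]_k) :
  vdim S f -> (forall i, (i < r)%N -> S (F i)) -> vfree r F -> (r <= f)%N.
Proof.
move=> [b [_ _ b_spans]] SF /vfree_le F_free; rewrite leqNgt; apply/negP => lt_fr.
move: {F_free}(F_free _ lt_fr) => F_free.
have /choice [G FG] : forall j, exists c : 'I_f -> R,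
    (j < f.+1)%N -> F j = \sum_i c i *: b i.
  move=> j; have [lt_j | _] := ltnP j f.+1; last by exists (fun=> 0).
  by have [c ->] := b_spans _ (SF j (leq_trans lt_j lt_fr)); exists c.
have [a [j lt_j nz_aj] rel_a] := nontrivial_dependence G.
apply: (negP nz_aj); apply/eqP/(F_free a _ j lt_j).
transitivity (\sum_(l < f.+1) \sum_i (a l * G l i) *: b i).
  apply: eq_bigr => l _; rewrite FG // scaler_sumr.
  by apply: eq_bigr => i _; rewrite scalerA.
by rewrite exchange_big big1 // => i _; rewrite -scaler_suml rel_a scale0r.
Qed.

Lemma vfree_extend k r (F : nat -> 'cV[R]_k) t : vfree r F ->
  ~ (exists c : 'I_r -> R, t = \sum_i c i *: F i) ->
  vfree r.+1 (fun i => if i == r then t else F i).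
Proof.
move=> F_free t_out c; rewrite big_ord_recr /= eqxx.
rewrite (eq_bigr (fun i : 'I_r => c i *: F i)) => [rel_c|i _]; last by rewrite ltn_eqF.
have cr0 : c r = 0.
  apply: contra_notP t_out => /eqP nz_cr; exists (fun i => - c i / c r).
  apply: (scalerI nz_cr); move/eqP: rel_c; rewrite addrC addr_eq0 => /eqP ->.
  rewrite scaler_sumr -sumrN; apply: eq_bigr => i _.
  by rewrite scalerA mulrCA mulfV // mulr1 scaleNr.
rewrite cr0 scale0r addr0 in rel_c.
by move=> i; rewrite ltnS leq_eqVlt => /predU1P [-> //| lt_ir]; apply: F_free.
Qed.

End Dependence.

Section ImpulsiveInputs.
Variable R : fieldType.
Variables (n m p : nat) (A : 'M[R]_n) (B : 'M[R]_(n, m)).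
Variables (C : 'M[R]_(p, n)) (D : 'M[R]_(p, m)).

Definition impulse_state k (v : nat -> 'cV[R]_m) : 'cV[R]_n :=
  \sum_(j < k) A ^+ j *m B *m v j.

(* Coefficient of delta^(l) in the output produced by the impulsive input
   sum_(j < k) v j delta^(j). *)
Definition output_impulse k (v : nat -> 'cV[R]_m) l : 'cV[R]_p :=
  D *m v l + \sum_(j < k | (l < j)%N) C *m A ^+ (j - l.+1) *m B *m v j.

Definition admissible k v := forall l, (l < k)%N -> output_impulse k v l = 0.

Lemma impulse_stateS k v :
  impulse_state k.+1 v = B *m v 0%N + A *m impulse_state k (fun i => v i.+1).
Proof.
rewrite /impulse_state big_ord_recl expr0 mul1mx mulmx_sumr; congr (_ + _).
by apply: eq_bigr => j _; rewrite exprS -mulmxE !mulmxA.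
Qed.

Lemma output_impulse0 k v :
  output_impulse k.+1 v 0 = D *m v 0%N + C *m impulse_state k (fun i => v i.+1).
Proof.
rewrite /output_impulse /impulse_state big_mkcond big_ord_recl /= add0r mulmx_sumr.
by congr (_ + _); apply: eq_bigr => j _; rewrite subn1 !mulmxA.
Qed.

Lemma output_impulseS k v l :
  output_impulse k.+1 v l.+1 = output_impulse k (fun i => v i.+1) l.
Proof.
by rewrite /output_impulse big_mkcond big_ord_recl /= add0r -big_mkcond.
Qed.

Lemma admissibleS k v : admissible k.+1 v <->
  D *m v 0%N + C *m impulse_state k (fun i => v i.+1) = 0
  /\ admissible k (fun i => v i.+1).
Proof.
rewrite -output_impulse0; split=> [adm_v | [adm0 adm_v] [|l] lt_l //].
  by split=> [|l lt_l]; rewrite -?output_impulseS; apply: adm_v.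
by rewrite output_impulseS; apply: adm_v.
Qed.

Lemma RseqE k x :
  Rseq A B C D k x <-> exists2 v, admissible k v & x = impulse_state k v.
Proof.
elim: k x => [|k IH] x /=.
  by split=> [->|[v _ ->]]; [exists (fun=> 0) | ]; rewrite /impulse_state ?big_ord0.
split=> [[w [a [/IH [v adm_v ->] out0 ->]]] | [v /admissibleS [out0 adm_v] ->]].
  exists (fun i => if i is i'.+1 then v i' else a).
    by apply/admissibleS; rewrite addrC.
  by rewrite impulse_stateS addrC.
exists (impulse_state k (fun i => v i.+1)), (v 0%N); rewrite impulse_stateS.
by split; rewrite 1?addrC //; apply/IH; exists (fun i => v i.+1).
Qed.

Lemma impulse_state_lin (I : finType) (c : I -> R) k (w : I -> nat -> 'cV[R]_m) :
  impulse_state k (fun j => \sum_i c i *: w i j) = \sum_i c i *: impulse_state k (w i).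
Proof.
rewrite /impulse_state; under eq_bigr do rewrite mulmx_sumr.
rewrite exchange_big; apply: eq_bigr => i _; rewrite scaler_sumr.
by apply: eq_bigr => j _; rewrite scalemxAr.
Qed.

Lemma admissible_lin (I : finType) (c : I -> R) k (w : I -> nat -> 'cV[R]_m) :
  (forall i, admissible k (w i)) -> admissible k (fun j => \sum_i c i *: w i j).
Proof.
elim: k w => [|k IH] w adm_w; first by [].
apply/admissibleS; split; last by apply: IH => i; case/admissibleS: (adm_w i).
rewrite (impulse_state_lin c k (fun i j => w i j.+1)) !mulmx_sumr -big_split.
apply: big1 => i _ /=; rewrite -!scalemxAr -scalerDr.
by case/admissibleS: (adm_w i) => -> _; rewrite scaler0.
Qed.

Lemma impulse_state_pad k K v : (forall j, (k <= j)%N -> v j = 0) -> (k <= K)%N ->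
  impulse_state K v = impulse_state k v.
Proof.
move=> v_k le_kK; rewrite /impulse_state.
rewrite (big_ord_widen K (fun j => A ^+ j *m B *m v j) le_kK) [RHS]big_mkcond.
by apply: eq_bigr => j _; case: ltnP => // /v_k ->; rewrite mulmx0.
Qed.

Lemma Rseq_sum k r (c : 'I_r -> R) (F : 'I_r -> 'cV[R]_n) :
  (forall i, Rseq A B C D k (F i)) -> Rseq A B C D k (\sum_i c i *: F i).
Proof.
move=> RF; have /choice [w Fw] :
    forall i, exists v, admissible k v /\ F i = impulse_state k v.
  by move=> i; have /RseqE [v adm_v ->] := RF i; exists v.
apply/RseqE; exists (fun j => \sum_i c i *: w i j).
  by apply: admissible_lin => i; case: (Fw i).
by rewrite impulse_state_lin; apply: eq_bigr => i _; case: (Fw i) => _ ->.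
Qed.

Lemma Rseq_le k k' x : (k <= k')%N -> Rseq A B C D k x -> Rseq A B C D k' x.
Proof.
have succ i y : Rseq A B C D i y -> Rseq A B C D i.+1 y.
  elim: i y => [|i IH] y /=; first by move=> ->; exists 0, 0; split; rewrite ?mulmx0 ?addr0.
  by move=> [w [a [Rw out0 ->]]]; exists w, a; split=> //; apply: IH.
move=> /subnK <-; elim: (k' - k)%N => // t IH Rx.
by rewrite addSn; apply/succ/IH.
Qed.

Lemma Rseq_stationary k : (forall x, Rseq A B C D k.+1 x -> Rseq A B C D k x) ->
  forall k' x, Rseq A B C D k' x -> Rseq A B C D k x.
Proof.
move=> stat_k k' x; have [le_k'k | lt_kk'] := leqP k' k; first exact: Rseq_le.
have stat t y : Rseq A B C D (t + k).+1 y -> Rseq A B C D (t + k) y.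
  elim: t y => [|t IH] y; first exact: stat_k.
  by rewrite addSn => -[w [a [Rw out0 ->]]]; exists w, a; split=> //; apply: IH.
rewrite -(subnK (ltnW lt_kk')); elim: (k' - k)%N x => // t IH x.
by rewrite addSn => /stat; apply: IH.
Qed.

Lemma Mk_mxcol K (v : nat -> 'cV[R]_m) :
  Mk A B C D K *m \mxcol_(j < K) v j
  = \mxcol_(i < K) output_impulse K v (K - i.+1).
Proof.
rewrite /Mk mul_mxblock_mxrow; apply: eq_mxcol => i.
have lt_iK := ltn_ord i; set l := (K - i.+1)%N.
have lt_lK : (l < K)%N by rewrite /l; lia.
rewrite (bigID (fun j : 'I_K => (l < j)%N)) /= addrC /output_impulse.
congr (_ + _); last first.
  apply: eq_bigr => j lt_lj; rewrite !ifF; last 2 first.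
  - by apply/negbTE; move: lt_lj; rewrite /l; lia.
  - by apply/negbTE; move: lt_lj; rewrite /l; lia.
  by congr (C *m A ^+ _ *m B *m _); move: lt_lj; rewrite /l; lia.
rewrite (bigD1 (Ordinal lt_lK)) /= ?ltnn // ifF; last by apply/negbTE; rewrite /l; lia.
rewrite ifT; last by apply/eqP; rewrite /l; lia.
rewrite big1 ?addr0 // => j /andP [le_jl ne_jl]; rewrite ifT ?mul0mx //.
by move: le_jl ne_jl; rewrite -val_eqE /l /=; lia.
Qed.

Lemma Mk_mxcol_eq0 K (v : nat -> 'cV[R]_m) :
  Mk A B C D K *m \mxcol_(j < K) v j = 0 <-> admissible K v.
Proof.
rewrite Mk_mxcol; split=> [out0 l lt_lK | adm_v].
  have lt_iK : (K - l.+1 < K)%N by lia.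
  have := congr1 (fun M => submxcol M (Ordinal lt_iK)) out0.
  by rewrite mxcolK submxcol0 /= (_ : K - (K - l.+1).+1 = l)%N //; lia.
rewrite -(mxcol0 (p_ := fun _ : 'I_K => p)); apply: eq_mxcol => i.
by apply: adm_v; have := ltn_ord i; lia.
Qed.

Lemma ctrbk_mxcol K (v : nat -> 'cV[R]_m) :
  ctrbk A B K *m \mxcol_(j < K) v j = impulse_state K v.
Proof. by rewrite /ctrbk mul_mxrow_mxcol. Qed.

Lemma Rseq_ctrbk_ker K q (N : 'M[R]_((\sum_(j < K) m)%N, q)) :
  col_basis_ker (Mk A B C D K) N -> forall x,
  Rseq A B C D K x <-> exists w, x = ctrbk A B K *m N *m w.
Proof.
move=> [MN0 _ N_spans] x; split=> [/RseqE [v adm_v ->] | [w ->]].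
  have [w v_Nw] := N_spans _ (proj2 (Mk_mxcol_eq0 K v) adm_v).
  by exists w; rewrite -ctrbk_mxcol v_Nw mulmxA.
pose v j := oapp (submxcol (N *m w)) 0 (insub j : option 'I_K).
have Nw_v : N *m w = \mxcol_(j < K) v j.
  by rewrite -[LHS]submxcolK; apply: eq_mxcol => j; rewrite /v valK.
apply/RseqE; exists v; last by rewrite -mulmxA Nw_v ctrbk_mxcol.
by apply/Mk_mxcol_eq0; rewrite -Nw_v mulmxA MN0 mul0mx.
Qed.

Fixpoint vpoly k (v : nat -> 'cV[R]_m) : 'cV[{poly R}]_m :=
  if k is k'.+1 then polmx (v 0%N) + 'X *: vpoly k' (fun i => v i.+1) else 0.

Definition delay t (v : nat -> 'cV[R]_m) i := if (i < t)%N then 0 else v (i - t)%N.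

(* The polynomial part of (sI - A)^-1 B u(s) for u(s) = vpoly k v. *)
Fixpoint state_poly k (v : nat -> 'cV[R]_m) : 'cV[{poly R}]_n :=
  if k is k'.+1 then
    polmx (impulse_state k' (fun i => v i.+1)) + 'X *: state_poly k' (fun i => v i.+1)
  else 0.

Definition output_poly k v := polmx C *m state_poly k v + polmx D *m vpoly k v.

Lemma vcoef_vpoly k v j : vcoef (vpoly k v) j = if (j < k)%N then v j else 0.
Proof.
elim: k v j => [|k IH] v j /=; first exact: vcoef0.
by rewrite vcoef_polmxX; case: j => [|j] //; rewrite IH.
Qed.

Lemma vpoly_vcoef k u :
  (forall j, (k <= j)%N -> vcoef u j = 0) -> vpoly k (vcoef u) = u.
Proof.
by move=> u_k; apply: vcoef_inj => j; rewrite vcoef_vpoly; case: ltnP => // /u_k ->.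
Qed.

Lemma vpoly_delay t k v : vpoly (t + k) (delay t v) = 'X^t *: vpoly k v.
Proof.
elim: t => [|t IH].
  by rewrite expr0 scale1r; congr vpoly; apply: funext => j; rewrite /delay subn0.
rewrite addSn /= {1}/delay /= /polmx map_mx0 add0r exprS -scalerA -IH.
by congr (_ *: vpoly _ _); apply: funext => j; rewrite /delay ltnS subSS.
Qed.

Lemma admissible_delay t k v : admissible k v -> impulse_state k v = 0 ->
  admissible (t + k) (delay t v) /\ impulse_state (t + k) (delay t v) = 0.
Proof.
move=> adm_v v0; elim: t => [|t [IH_adm IH_state]].
  by rewrite (_ : delay 0 v = v) //; apply: funext => j; rewrite /delay subn0.
have shift : (fun i => delay t.+1 v i.+1) = delay t v.
  by apply: funext => j; rewrite /delay ltnS subSS.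
rewrite addSn impulse_stateS shift IH_state /delay /= !mulmx0 addr0; split=> //.
by apply/admissibleS; rewrite -/(delay t.+1 v) shift IH_state !mulmx0 addr0.
Qed.

Lemma char_poly_mx_state_poly k v : char_poly_mx A *m state_poly k v
  = polmx B *m vpoly k v - polmx (impulse_state k v).
Proof.
elim: k v => [|k IH] v /=.
  by rewrite !mulmx0 /impulse_state big_ord0 /polmx map_mx0 subr0.
rewrite impulse_stateS mulmxDr -scalemxAr IH /char_poly_mx mulmxBl mul_scalar_mx.
rewrite mulmxDr -scalemxAr /polmx map_mxD !map_mxM scalerBr.
by rewrite [LHS]addrC [LHS]addrA addrNK opprD addrACA subrr add0r.
Qed.

Lemma output_polyS k v : output_poly k.+1 v =
  polmx (D *m v 0%N + C *m impulse_state k (fun i => v i.+1))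
  + 'X *: output_poly k (fun i => v i.+1).
Proof.
rewrite /output_poly /= !mulmxDr -!scalemxAr /polmx map_mxD !map_mxM scalerDr.
by rewrite addrACA [_ *m map_mx _ _ + _]addrC.
Qed.

Lemma output_poly_eq0 k v : output_poly k v = 0 <-> admissible k v.
Proof.
elim: k v => [|k IH] v; first by rewrite /output_poly /= !mulmx0 addr0.
by rewrite output_polyS polmxX_eq0 IH admissibleS.
Qed.

Lemma tf_num_vpoly k v : tf_num A B C D (vpoly k v) = char_poly A *: output_poly k v
  + polmx C *m \adj (char_poly_mx A) *m polmx (impulse_state k v).
Proof.
rewrite /tf_num -!mulmxA.
have -> : polmx B *m vpoly k v
    = char_poly_mx A *m state_poly k v + polmx (impulse_state k v).
  by rewrite char_poly_mx_state_poly subrK.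
rewrite (mulmxDr (\adj _)) (mulmxA (\adj _)) mul_adj_mx mul_scalar_mx.
by rewrite mulmxDr -scalemxAr /output_poly scalerDr mulmxA addrAC.
Qed.

Lemma size_adj_char_poly_mx i j : (size (\adj (char_poly_mx A) i j) <= n)%N.
Proof.
rewrite mxE /cofactor size_Msign; case: n A i j => [|n'] A' i j; first by case: i.
apply: leq_trans (size_det_le (s := 1) _) _; rewrite ?muln1 // => a b; rewrite !mxE.
apply: leq_trans (size_polyD _ _) _.
rewrite geq_max size_polyN size_polyC; apply/andP; split; last by case: (_ != 0).
by case: (_ == _); rewrite ?mulr1n ?mulr0n ?size_polyX ?size_poly0.
Qed.

Lemma size_adj_num (x : 'cV[R]_n) r :
  (size ((polmx C *m \adj (char_poly_mx A) *m polmx x) r ord0) <= n)%N.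
Proof.
rewrite mxE; apply: leq_trans (size_sum _ _ _) _; apply/bigmax_leqP => l _.
rewrite !mxE big_distrl /=; apply: leq_trans (size_sum _ _ _) _.
apply/bigmax_leqP => t _; rewrite !mxE -mulrA mul_polyC mulrC mul_polyC.
apply: leq_trans (size_scale_leq _ _) _; apply: leq_trans (size_scale_leq _ _) _.
by have := size_adj_char_poly_mx t l; rewrite mxE.
Qed.

(* The second summand of tf_num_vpoly has degree < n = deg (char_poly A),
   so strict properness forces the polynomial part output_poly to vanish. *)
Lemma U_imp_vpoly k v : U_imp A B C D (vpoly k v) <-> admissible k v.
Proof.
rewrite -output_poly_eq0 /U_imp size_char_poly; split=> [proper_u | out0 r]; last first.
  by rewrite tf_num_vpoly out0 scaler0 add0r ltnS size_adj_num.
apply/matrixP => r z; rewrite (ord1 z) [RHS]mxE; set P := output_poly k v.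
apply/eqP/negP => /negP nz_P; have := proper_u r.
rewrite tf_num_vpoly -/P mxE [(_ *: P) _ _]mxE.
have big_P : (n.+1 <= size (char_poly A * P r ord0)%R)%N.
  rewrite mulrC size_Mmonic ?char_poly_monic // size_char_poly addnS /=.
  by rewrite -add1n leq_add2r size_poly_gt0.
rewrite size_polyDl; first by rewrite ltnNge big_P.
exact: leq_ltn_trans (size_adj_num _ r) big_P.
Qed.

Lemma U_imp_vcoef k u : (forall j, (k <= j)%N -> vcoef u j = 0) ->
  U_imp A B C D u <-> admissible k (vcoef u).
Proof. by move=> u_k; rewrite -U_imp_vpoly vpoly_vcoef. Qed.

End ImpulsiveInputs.

Section StronglyReachable.
Variable R : fieldType.
Variables (n m p : nat) (A : 'M[R]_n) (B : 'M[R]_(n, m)).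
Variables (C : 'M[R]_(p, n)) (D : 'M[R]_(p, m)).
Variable f : nat.
Hypothesis U_imp_dim : pvdim (U_imp A B C D) f.

Lemma impulse_state_eq0 k v : admissible A B C D k v -> impulse_state A B k v = 0 ->
  forall j, (j < k)%N -> v j = 0.
Proof.
move=> adm_v v0; have [q nz_q qu0] : exists2 q : {poly R}, q != 0 & q *: vpoly k v = 0.
  apply: (pvdim_torsion U_imp_dim) => t.
  by rewrite -vpoly_delay U_imp_vpoly; case: (admissible_delay t adm_v v0).
have u0 : vpoly k v = 0 by apply/eqP; move/eqP: qu0; rewrite scalemx_eq0 (negbTE nz_q).
by move=> j lt_jk; have := vcoef_vpoly k v j; rewrite lt_jk u0 vcoef0.
Qed.

Lemma Rs_vdim : vdim (Rs A B C D) f.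
Proof.
have [b [Ub b_free b_spans]] := U_imp_dim.
pose K := (\max_(i < f) vsize (b i))%N.
have b_K i j : (K <= j)%N -> vcoef (b i) j = 0.
  move=> le_Kj; apply: vcoef_vsize; apply: leq_trans le_Kj.
  exact: (@leq_bigmax _ (fun i => vsize (b i)) i).
have adm_b i : admissible A B C D K (vcoef (b i)).
  exact/(U_imp_vcoef A B C D (b_K i))/Ub.
exists (fun i => impulse_state A B K (vcoef (b i))); split.
- by move=> i; exists K; apply/RseqE; exists (vcoef (b i)).
- move=> c; rewrite -impulse_state_lin => state0; apply: b_free.
  set u := \sum_i (c i)%:P *: b i.
  have vcoef_u : (fun j => \sum_i c i *: vcoef (b i) j) = vcoef u.
    by apply: funext => j; rewrite vcoef_lin.
  have adm_u : admissible A B C D K (vcoef u) by rewrite -vcoef_u; apply: admissible_lin.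
  rewrite vcoef_u in state0; apply: vcoef_inj => j; rewrite vcoef0.
  have [lt_jK | le_Kj] := ltnP j K; first exact: impulse_state_eq0 adm_u state0 _ lt_jK.
  by rewrite -vcoef_u big1 // => i _; rewrite b_K // scaler0.
move=> x [k /RseqE [v adm_v ->]].
have [c u_c] := b_spans _ (proj2 (U_imp_vpoly A B C D k v) adm_v); exists c.
have u_k j : (k <= j)%N -> vcoef (vpoly k v) j = 0.
  by move=> le_kj; rewrite vcoef_vpoly ltnNge le_kj.
transitivity (impulse_state A B (maxn k K) (vcoef (vpoly k v))).
  rewrite (impulse_state_pad _ _ u_k (leq_maxl _ _)).
  by apply: eq_bigr => j _; rewrite vcoef_vpoly ltn_ord.
rewrite u_c (_ : vcoef _ = fun j => \sum_i c i *: vcoef (b i) j); last first.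
  by apply: funext => j; rewrite vcoef_lin.
rewrite impulse_state_lin; apply: eq_bigr => i _.
by rewrite (impulse_state_pad _ _ (b_K i) (leq_maxr _ _)).
Qed.

Variable d : nat.
Hypothesis kerD_dim : vdim (fun v : 'cV[R]_m => D *m v = 0) d.

Lemma kerD_vfree : exists F, vfree d F /\ forall i, (i < d)%N -> Rseq A B C D 1 (F i).
Proof.
have [e [De e_free _]] := kerD_dim.
pose a i := oapp e 0 (insub i : option 'I_d).
have Da i : D *m a i = 0 by rewrite /a; case: insub => [j|] /=; rewrite ?De ?mulmx0.
exists (fun i => B *m a i); split=> [c Bc0 i lt_id | i _]; last first.
  by exists 0, (a i); split; rewrite ?Da ?mulmx0 ?add0r.
pose alpha := \sum_(i < d) c i *: e i.
have v0 : impulse_state A B 1 (fun j => if j is 0 then alpha else 0) = 0.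
  rewrite impulse_stateS /impulse_state big_ord0 mulmx0 addr0 -Bc0 mulmx_sumr.
  by apply: eq_bigr => j _; rewrite /a valK -scalemxAr.
have Dalpha : D *m alpha = 0.
  by rewrite mulmx_sumr big1 // => j _; rewrite -scalemxAr De scaler0.
have adm_v : admissible A B C D 1 (fun j => if j is 0 then alpha else 0).
  by apply/admissibleS; rewrite /impulse_state big_ord0 mulmx0 addr0.
have alpha0 := impulse_state_eq0 adm_v v0 (ltnSn 0).
exact: (e_free (fun i : 'I_d => c i) alpha0 (Ordinal lt_id)).
Qed.

Lemma Rseq_stalls_or_vfree j :
  (exists2 i, (i < j)%N & forall x, Rseq A B C D i.+2 x -> Rseq A B C D i.+1 x)
  \/ exists F, vfree (d + j) F /\ forall i, (i < d + j)%N -> Rseq A B C D j.+1 (F i).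
Proof.
elim: j => [|j [[i lt_ij stat] | [F [F_free RF]]]].
- by right; rewrite addn0; apply: kerD_vfree.
- by left; exists i => //; apply: ltnW.
have [stat | /existsNP [t /not_implyP [Rt t_out]]] :=
  pselect (forall x, Rseq A B C D j.+2 x -> Rseq A B C D j.+1 x).
  by left; exists j.
right; exists (fun i => if i == (d + j)%N then t else F i); split.
  rewrite addnS; apply: vfree_extend => // -[c t_span]; apply: t_out.
  by rewrite t_span; apply: Rseq_sum => i; apply: RF.
move=> i lt_i; case: eqP => [_ | /eqP ne_i]; first exact: Rt.
by apply: Rseq_le (leqnSn _) (RF i _); move: lt_i ne_i; rewrite addnS; lia.
Qed.

Lemma Rs_Rseq x : Rs A B C D x -> Rseq A B C D (f - d).+1 x.
Proof.
have [[i lt_i stat] [k /(Rseq_stationary stat)] | [F [F_free RF]]] :=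
  Rseq_stalls_or_vfree (f - d).+1; first exact: Rseq_le.
have RsF i : (i < d + (f - d).+1)%N -> Rs A B C D (F i) by exists (f - d).+2; apply: RF.
by have := vdim_vfree Rs_vdim RsF F_free; lia.
Qed.

End StronglyReachable.

Theorem mainTheorem4 (R : realType) (n m p : nat) (A : 'M[R]_n)
  (B : 'M[R]_(n, m)) (C : 'M[R]_(p, n)) (D : 'M[R]_(p, m)) (d f : nat) :
  vdim (fun v : 'cV[R]_m => D *m v = 0) d ->
  (0 < f)%N ->
  pvdim (U_imp A B C D) f ->
  forall (q : nat) (N : 'M[R]_((\sum_(j < (f - d).+1) m)%N, q)),
    col_basis_ker (Mk A B C D (f - d).+1) N ->
    (forall x : 'cV[R]_n,
        Rs A B C D x <-> exists w : 'cV[R]_q, x = ctrbk A B (f - d).+1 *m N *m w)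
    /\ vdim (Rs A B C D) f.
Proof.
move=> kerD_dim _ U_imp_dim q N N_basis; split; last exact: Rs_vdim.
move=> x; rewrite -(Rseq_ctrbk_ker N_basis); split; last by exists (f - d).+1.
exact: Rs_Rseq.
Qed.
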